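(* No tetrahedron $\mathcal T$ admits both a monostable weighting and a mono-unstable weighting: there do not exist $O,O'\in\operatorname{int}\mathcal T$ (equal or not) such that $(\mathcal T,O)$ is monostable and $(\mathcal T,O')$ is mono-unstable.
   Context: A weighted polyhedron is a pair $(\mathcal P,O)$ with $\mathcal P$ a convex polyhedron and $O\in\operatorname{int}\mathcal P$. $(\mathcal P,O)$ is in equilibrium on a face, edge or vertex $X$ if there exists $Q$ in the relative interior of $X$ (a vertex being its own relative interior) such that the plane perpendicular to $[O,Q]$ at $Q$ supports $\mathcal P$; equilibria on faces are stable, on vertices unstable. $(\mathcal P,O)$ is monostable if exactly one face carries an equilibrium, and mono-unstable if exactly one vertex carries an equilibrium. *)

From HB Require Import structures.
From mathcomp Require Import all_boot all_order all_algebra.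
From mathcomp Require Import all_classical all_reals all_analysis.
Set Implicit Arguments. Unset Strict Implicit. Unset Printing Implicit Defensive.
Import Order.TTheory GRing.Theory Num.Theory.
Import numFieldNormedType.Exports.
Local Open Scope classical_set_scope.
Local Open Scope ring_scope.

Section Tetra.
Variable R : realType.
Notation pt := 'rV[R]_3.

Definition dot (u w : pt) : R := (u *m w^T) 0 0.

Definition affinely_independent (v : 'I_4 -> pt) : Prop :=
  forall l : 'I_4 -> R, \sum_i l i = 0 -> \sum_i l i *: v i = 0 ->
    forall i, l i = 0.

Definition tetra (v : 'I_4 -> pt) : set pt :=
  [set x | exists l : 'I_4 -> R, (forall i, 0 <= l i) /\ \sum_i l i = 1 /\
           x = \sum_i l i *: v i].

(* relative interior of the face opposite to vertex k (the triangle spanned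
   by the three other vertices) *)
Definition face_relint (v : 'I_4 -> pt) (k : 'I_4) : set pt :=
  [set x | exists l : 'I_4 -> R, l k = 0 /\ (forall i, i != k -> 0 < l i) /\
           \sum_i l i = 1 /\ x = \sum_i l i *: v i].

(* the plane through Q perpendicular to [O,Q] supports P, with Q in P *)
Definition supports_at (P : set pt) (O Q : pt) : Prop :=
  P Q /\ Q != O /\
  ((forall X, P X -> dot (X - Q) (Q - O) <= 0) \/
   (forall X, P X -> dot (X - Q) (Q - O) >= 0)).

Definition equilibrium_on_face (v : 'I_4 -> pt) (O : pt) (k : 'I_4) : Prop :=
  exists Q, face_relint v k Q /\ supports_at (tetra v) O Q.

Definition equilibrium_on_vertex (v : 'I_4 -> pt) (O : pt) (j : 'I_4) : Prop :=
  supports_at (tetra v) O (v j).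

Definition monostable (v : 'I_4 -> pt) (O : pt) : Prop :=
  exists! k : 'I_4, equilibrium_on_face v O k.

Definition mono_unstable (v : 'I_4 -> pt) (O : pt) : Prop :=
  exists! j : 'I_4, equilibrium_on_vertex v O j.

End Tetra.

From HB Require Import structures.
From mathcomp Require Import all_boot all_order all_algebra.
From mathcomp Require Import all_classical all_reals all_analysis.
From mathcomp Require Import ring lra.
Import Order.TTheory GRing.Theory Num.Theory.
Import numFieldNormedType.Exports.
Set Implicit Arguments. Unset Strict Implicit. Unset Printing Implicit Defensive.
Local Open Scope classical_set_scope.
Local Open Scope ring_scope.

(* Let [K x] be the gradient of the [x]-th barycentric coordinate and
   [gram x y = K x . K y].  Each row of [gram] sums to 0, and for [x != y]
   [gram x y > 0] means that the faces opposite [v x] and [v y] meet at an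
   obtuse dihedral angle.

   If the face opposite [v x] carries no equilibrium for the weight point O,
   the foot of the perpendicular from O to its plane lies beyond some face [y]
   with [gram x y > 0], and O is strictly closer to the plane of [y] than to
   that of [x].  For a monostable weighting every face but one descends in
   this way, so these obtuse edges form a tree on the four faces; a vertex of
   degree three would contradict the zero row sums, so the obtuse dihedral
   angles contain a Hamiltonian path [u1 u2 u3 u4].  Cauchy-Schwarz and the
   row sums then show that no face angle at [v u2] or at [v u3] is obtuse, and
   such a vertex is an equilibrium for every weighting: no weighting of the
   tetrahedron is mono-unstable. *)

Lemma uniq_ord_extend n (s : seq 'I_n) :
  uniq s -> (size s < n)%N -> exists x, uniq (x :: s).
Proof.
move=> s_uniq s_small; case: (pickP [predC s]) => [x sx | s_full].
  by exists x; rewrite /= s_uniq andbT; exact: sx.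
move: s_small; rewrite ltnNge -{1}(card_ord n) (leq_trans _ (card_size s)) //.
by apply/subset_leq_card/fintype.subsetP => x _; move/negbFE: (s_full x).
Qed.

Lemma mem_uniq_full (T : finType) (s : seq T) x :
  uniq s -> size s = #|T| -> x \in s.
Proof.
move=> /card_uniqP s_uniq s_size.
have /subset_cardP s_T : #|s| = #|T| by rewrite s_uniq.
by rewrite (s_T (subset_predT _)).
Qed.

Lemma sum_uniq_full (T : finType) (V : nmodType) (F : T -> V) (s : seq T) :
  uniq s -> size s = #|T| -> \sum_i F i = \sum_(i <- s) F i.
Proof.
move=> s_uniq s_size; rewrite [RHS]big_uniq //.
by apply: eq_bigl => x; rewrite mem_uniq_full.
Qed.

Lemma sum_ord4 (V : nmodType) (F : 'I_4 -> V) a b c d :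
  uniq [:: a; b; c; d] -> \sum_i F i = F a + F b + F c + F d.
Proof.
move=> abcd; rewrite (@sum_uniq_full _ _ F _ abcd) ?card_ord //.
by rewrite !big_cons big_nil addr0 !addrA.
Qed.

Lemma hamiltonian_path_of_descent (R : realDomainType) (P : 'I_4 -> 'I_4 -> Prop)
    (d : 'I_4 -> R) (k : 'I_4) :
  (forall x y, P x y -> P y x) ->
  (forall s a b c, uniq [:: s; a; b; c] -> P s a -> P s b -> P s c -> False) ->
  (forall x, x != k -> exists2 y, P x y & d y < d x) ->
  exists u1 u2 u3 u4, [/\ uniq [:: u1; u2; u3; u4], P u1 u2, P u2 u3 & P u3 u4].
Proof.
move=> P_sym no_star descent.
have [a ak_uniq amin] : exists2 a, uniq [:: a; k] & forall x, x != k -> d a <= d x.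
  have [x0] := @uniq_ord_extend _ [:: k] isT isT; rewrite /= inE andbT => x0k.
  by case: (@arg_minP _ _ _ x0 (fun x => x != k) d x0k) => a; exists a; rewrite //= inE andbT.
have [b bak] := uniq_ord_extend ak_uniq isT.
have [c cbak] := uniq_ord_extend bak isT; clear bak.
wlog le_bc : b c cbak / d b <= d c.
  move=> gen; have [|lt_cb] := leP (d b) (d c); first exact: gen.
  apply: (gen c b) (ltW lt_cb).
  by move: cbak; rewrite /= !inE !negb_or eq_sym => /and4P[/and3P[-> -> ->] /andP[-> ->] ->].
have [ck bk ak] : [/\ c != k, b != k & a != k].
  by move: cbak; rewrite /= !inE !negb_or => /and4P[/and3P[_ _ ->] /andP[_ ->] -> _].
have uniq4 s : size s = 4 -> all (mem s) [:: c; b; a; k] -> uniq s.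
  by move=> s4 /allP sub; apply: leq_size_uniq cbak sub _; rewrite s4.
have cover x : x \in [:: c; b; a; k] by rewrite mem_uniq_full ?card_ord.
have [ya Pa da] := descent a ak.
have [yb Pb db] := descent b bk.
have [yc Pc dc] := descent c ck.
(* By the choice of [a] and [d b <= d c], [a] descends to [k], [b] to [a] or
   [k], and [c] to [a], [b] or [k]: two of these trees are stars, four are
   paths. *)
have ya_k : ya = k by apply: contraTeq da; rewrite -leNgt => /amin.
subst ya; have Pka := P_sym _ _ Pa; have Pyb := P_sym _ _ Pb; have Pyc := P_sym _ _ Pc.
move: (cover yb) (cover yc) db dc Pb Pc Pyb Pyc; rewrite !inE.
move=> /or4P[]/eqP-> /or4P[]/eqP-> db dc Pb Pc Pyb Pyc; try by exfalso; lra.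
- by exists k, a, b, c; split; rewrite // uniq4 //= !inE !eqxx !orbT.
- by exfalso; apply: (no_star a k b c); rewrite // uniq4 //= !inE !eqxx !orbT.
- by exists b, a, k, c; split; rewrite // uniq4 //= !inE !eqxx !orbT.
- by exists a, k, b, c; split; rewrite // uniq4 //= !inE !eqxx !orbT.
- by exists b, k, a, c; split; rewrite // uniq4 //= !inE !eqxx !orbT.
- by exfalso; apply: (no_star k a b c); rewrite // uniq4 //= !inE !eqxx !orbT.
Qed.

Section DotProduct.
Variable R : realType.
Implicit Types u w : 'rV[R]_3.

Lemma dotE u w : dot u w = \sum_j u 0 j * w 0 j.
Proof. by rewrite /dot mxE; apply: eq_bigr => j _; rewrite mxE. Qed.

Lemma dotC u w : dot u w = dot w u.
Proof. by rewrite !dotE; apply: eq_bigr => j _; rewrite mulrC. Qed.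

Lemma dotDl u u' w : dot (u + u') w = dot u w + dot u' w.
Proof. by rewrite /dot mulmxDl mxE. Qed.

Lemma dotZl a u w : dot (a *: u) w = a * dot u w.
Proof. by rewrite /dot -scalemxAl mxE. Qed.

Lemma dotNl u w : dot (- u) w = - dot u w.
Proof. by rewrite /dot mulNmx mxE. Qed.

Lemma dotBl u u' w : dot (u - u') w = dot u w - dot u' w.
Proof. by rewrite dotDl dotNl. Qed.

Lemma dot0l w : dot 0 w = 0.
Proof. by rewrite /dot mul0mx mxE. Qed.

Lemma dot_suml (I : finType) (F : I -> 'rV[R]_3) w :
  dot (\sum_i F i) w = \sum_i dot (F i) w.
Proof. by rewrite /dot mulmx_suml summxE. Qed.

Lemma dotDr u w w' : dot u (w + w') = dot u w + dot u w'.
Proof. by rewrite dotC dotDl !(dotC u). Qed.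

Lemma dotZr a u w : dot u (a *: w) = a * dot u w.
Proof. by rewrite dotC dotZl dotC. Qed.

Lemma dotNr u w : dot u (- w) = - dot u w.
Proof. by rewrite dotC dotNl dotC. Qed.

Lemma dotBr u w w' : dot u (w - w') = dot u w - dot u w'.
Proof. by rewrite dotDr dotNr. Qed.

Lemma dot0r u : dot u 0 = 0.
Proof. by rewrite dotC dot0l. Qed.

Lemma dot_sumr (I : finType) (F : I -> 'rV[R]_3) u :
  dot u (\sum_i F i) = \sum_i dot u (F i).
Proof. by rewrite dotC dot_suml; apply: eq_bigr => i _; rewrite dotC. Qed.

Lemma dot_ge0 u : 0 <= dot u u.
Proof. by rewrite dotE sumr_ge0 // => j _; rewrite -expr2 sqr_ge0. Qed.

Lemma dot_self_gt0 u w : dot u w != 0 -> 0 < dot u u.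
Proof.
move=> uw_neq0; rewrite lt_def dot_ge0 andbT; apply: contra uw_neq0.
rewrite dotE psumr_eq0 => [/allP u0|j _]; last by rewrite -expr2 sqr_ge0.
rewrite dotE big1 // => j _.
by have := u0 j (mem_index_enum j); rewrite mulf_eq0 orbb => /eqP ->; rewrite mul0r.
Qed.

End DotProduct.

Lemma barycenterB (R : pzRingType) (V : lmodType R) (I : finType)
    (mu : I -> R) (p : I -> V) (w : V) :
  \sum_i mu i = 1 -> \sum_i mu i *: p i - w = \sum_i mu i *: (p i - w).
Proof.
move=> mu_sum; under [RHS]eq_bigr do rewrite scalerBr.
by rewrite sumrB -scaler_suml mu_sum scale1r.
Qed.

Lemma sum_mul_delta (R : pzRingType) (I : finType) (mu : I -> R) x :
  \sum_i mu i * (x == i)%:R = mu x.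
Proof.
rewrite (bigD1 x) //= eqxx mulr1 big1 ?addr0 // => i.
by rewrite eq_sym => /negPf ->; rewrite mulr0.
Qed.

Section BarycentricGradients.
Variables (R : realType) (v : 'I_4 -> 'rV[R]_3).

Definition edge_mx : 'M[R]_3 := \matrix_(i, j) (v (lift ord0 i) - v ord0) 0 j.

Lemma row_edge_mx i : row i edge_mx = v (lift ord0 i) - v ord0.
Proof. by apply/rowP => j; rewrite !mxE. Qed.

Lemma edge_mx_unit : affinely_independent v -> edge_mx \in unitmx.
Proof.
move=> v_indep; rewrite unitmxE unitfE; apply/negP => /det0P [c c_neq0 c_ker].
pose l x := if unlift ord0 x is Some i then c 0 i else - \sum_i c 0 i.
have l_lift i : l (lift ord0 i) = c 0 i by rewrite /l liftK.
have l_0 : l ord0 = - \sum_i c 0 i by rewrite /l unlift_none.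
have l_sum : \sum_x l x = 0.
  by rewrite big_ord_recl l_0; under [X in _ + X]eq_bigr do rewrite l_lift; rewrite addNr.
have l_comb : \sum_x l x *: v x = 0.
  rewrite big_ord_recl l_0 -[RHS]c_ker mulmx_sum_row.
  under [X in _ + X]eq_bigr do rewrite l_lift.
  under [RHS]eq_bigr do rewrite row_edge_mx scalerBr.
  by rewrite sumrB scaleNr scaler_suml addrC.
move/negP: c_neq0; apply; apply/eqP/rowP => i; rewrite mxE.
by rewrite -l_lift (v_indep l l_sum l_comb).
Qed.

Lemma bary_grad_exists : affinely_independent v ->
  exists K : 'I_4 -> 'rV[R]_3,
    [/\ forall x y z, dot (v y - v z) (K x) = (x == y)%:R - (x == z)%:R,
        \sum_x K x = 0
      & forall z u, u = \sum_x dot u (K x) *: (v x - v z)].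
Proof.
move=> /edge_mx_unit E_unit; set c := invmx edge_mx.
pose K x := if unlift ord0 x is Some i then row i c^T else - \sum_i row i c^T.
have K_lift i : K (lift ord0 i) = row i c^T by rewrite /K liftK.
have K_0 : K ord0 = - \sum_i row i c^T by rewrite /K unlift_none.
have dot_row u i : dot u (row i c^T) = (u *m c) 0 i.
  by rewrite !dotE !mxE; apply: eq_bigr => j _; rewrite !mxE.
have K_sum : \sum_x K x = 0.
  by rewrite big_ord_recl K_0; under [X in _ + X]eq_bigr do rewrite K_lift; rewrite addNr.
have K_edge0 x y : dot (v y - v ord0) (K x) = (x == y)%:R - (x == ord0)%:R.
  case: (unliftP ord0 y) => [j ->|->]; last by rewrite subrr dot0l subrr.
  rewrite -row_edge_mx.
  have dot_edge i : dot (row j edge_mx) (row i c^T) = (j == i)%:R.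
    by rewrite dot_row -row_mul mulmxV // !mxE eq_sym.
  case: (unliftP ord0 x) => [i ->|->].
    rewrite K_lift dot_edge (inj_eq lift_inj) [lift _ _ == _]eq_sym.
    by rewrite (negPf (neq_lift _ _)) subr0 eq_sym.
  rewrite K_0 dotNr dot_sumr eqxx (negPf (neq_lift _ _)) sub0r.
  under eq_bigr do rewrite dot_edge -[_%:R]mul1r.
  by rewrite (sum_mul_delta (fun=> 1)).
have K_decomp u : u = \sum_x dot u (K x) *: (v x - v ord0).
  rewrite big_ord_recl subrr scaler0 add0r.
  under eq_bigr do rewrite K_lift -row_edge_mx dot_row.
  by rewrite -mulmx_sum_row -mulmxA mulVmx // mulmx1.
have edge_shift y z : v y - v z = (v y - v ord0) - (v z - v ord0).
  by rewrite opprB addrA subrK.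
exists K; split=> // [x y z | z u].
  by rewrite edge_shift dotBl !K_edge0 opprB addrA subrK.
under eq_bigr do rewrite edge_shift scalerBr.
by rewrite sumrB -K_decomp -scaler_suml -dot_sumr K_sum dot0r scale0r subr0.
Qed.
End BarycentricGradients.

(* [a], [b], [c] and [ab], [ac], [bc] are the Gram entries of the gradients at
   [u1], [u2], [u4] for an obtuse path [u1 u2 u3 u4]; the last two hypotheses
   are the row sums at [u2] and [u4]. *)
Lemma obtuse_path_gram_ineqs (R : realFieldType) (a b c ab ac bc : R) :
  0 < a -> 0 < b -> 0 < c ->
  ab ^+ 2 <= a * b -> ac ^+ 2 <= a * c -> bc ^+ 2 <= b * c ->
  0 < ab -> ab + b + bc < 0 -> ac + bc + c < 0 ->
  [/\ c * ab <= ac * bc, b * ac <= ab * bc & a * bc <= ab * ac].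
Proof.
move=> a_gt0 b_gt0 c_gt0 ab_le ac_le bc_le ab_gt0 row_b row_c.
have bc_lt0 : bc < 0 by lra.
(* Each difference is a sum of products of factors of known sign. *)
split; rewrite -subr_le0.
- have -> : c * ab - ac * bc = - (c * - (ab + b + bc) - - (ac + bc + c) * bc) - (b * c - bc ^+ 2).
    by ring.
  nra.
- have -> : b * ac - ab * bc = - (b * - (ac + bc + c) - - (ab + b + bc) * bc) - (b * c - bc ^+ 2).
    by ring.
  nra.
- have [row_a|row_a] := lerP 0 (ac + a + ab).
    have -> : a * bc - ab * ac = - (a * - (ab + b + bc) + (ac + a + ab) * ab) - (a * b - ab ^+ 2).
      by ring.
    nra.
  have -> : a * bc - ab * ac = - (a * - (ac + bc + c) + (ac + a + ab) * ac) - (a * c - ac ^+ 2).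
    by ring.
  nra.
Qed.

Section Gram.
Variables (R : realType) (v K : 'I_4 -> 'rV[R]_3).
Hypothesis grad_edge : forall x y z, dot (v y - v z) (K x) = (x == y)%:R - (x == z)%:R.
Hypothesis grad_sum : \sum_x K x = 0.
Hypothesis edge_decomp : forall z u, u = \sum_x dot u (K x) *: (v x - v z).

Lemma dot_bary_grad (mu : 'I_4 -> R) z x : \sum_i mu i = 1 ->
  dot (\sum_i mu i *: v i - v z) (K x) = mu x - (x == z)%:R.
Proof.
move=> mu_sum; rewrite barycenterB // dot_suml.
under eq_bigr do rewrite dotZl grad_edge mulrBr.
by rewrite sumrB sum_mul_delta -mulr_suml mu_sum mul1r.
Qed.

Lemma dot_bary_gradB (mu nu : 'I_4 -> R) x : \sum_i mu i = 1 -> \sum_i nu i = 1 ->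
  dot (\sum_i nu i *: v i - \sum_i mu i *: v i) (K x) = nu x - mu x.
Proof.
move=> mu_sum nu_sum; rewrite -(subrKA (v x)) dotDl -[v x - _]opprB dotNl.
by rewrite !dot_bary_grad // opprB addrA subrK.
Qed.

Definition gram x y := dot (K x) (K y).

Lemma gramC x y : gram x y = gram y x.
Proof. exact: dotC. Qed.

Lemma gram_row_sum x : \sum_y gram x y = 0.
Proof. by rewrite /gram -dot_sumr grad_sum dot0r. Qed.

Lemma grad_decomp x : K x = \sum_y gram x y *: v y.
Proof.
rewrite {1}(edge_decomp ord0 (K x)); under eq_bigr do rewrite scalerBr.
by rewrite sumrB -scaler_suml -dot_sumr grad_sum dot0r scale0r subr0.
Qed.

Lemma gram_diag_gt0 x : 0 < gram x x.
Proof.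
have [y] := @uniq_ord_extend _ [:: x] isT isT; rewrite /= inE andbT => yx.
apply: (@dot_self_gt0 _ _ (v y - v x)).
by rewrite dotC grad_edge eqxx [x == _]eq_sym (negPf yx) sub0r oppr_eq0 oner_eq0.
Qed.

Lemma gram_cauchy_schwarz x y : x != y -> gram x y ^+ 2 < gram x x * gram y y.
Proof.
move=> xy; have xy_uniq : uniq [:: x; y] by rewrite /= inE xy.
have [z] := uniq_ord_extend xy_uniq isT.
rewrite /= !inE negb_or => /andP[/andP[zx zy] _].
have gxx := gram_diag_gt0 x; have gyy := gram_diag_gt0 y.
pose w := gram y y *: K x - gram x y *: K y.
have : 0 < dot w w.
  apply: (@dot_self_gt0 _ _ (v z - v x)); rewrite dotC /w dotBr !dotZr !grad_edge.
  rewrite eqxx !(eq_sym _ z) (negPf zx) (negPf zy) [y == _]eq_sym (negPf xy).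
  by rewrite !subrr mulr0 subr0 sub0r mulrN1 oppr_eq0 gt_eqF.
rewrite /w !dotBl !dotBr !dotZl !dotZr -!/(gram _ _) (gramC y x).
nra.
Qed.

Lemma gram_no_star s a b c : uniq [:: s; a; b; c] ->
  0 < gram s a -> 0 < gram s b -> 0 < gram s c -> False.
Proof.
move=> sabc gsa gsb gsc; have := gram_row_sum s; rewrite (sum_ord4 _ sabc).
by have := gram_diag_gt0 s; lra.
Qed.

Lemma face_equilibrium_of_gram (lam : 'I_4 -> R) x :
  (forall i, 0 < lam i) -> \sum_i lam i = 1 ->
  (forall y, y != x -> lam x * gram x y < lam y * gram x x) ->
  equilibrium_on_face v (\sum_i lam i *: v i) x.
Proof.
move=> lam_gt0 lam_sum lt_y; set O := \sum_i lam i *: v i.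
have gxx := gram_diag_gt0 x.
(* [O - t *: K x] is the orthogonal projection of [O] on the plane of face [x]. *)
pose t := lam x / gram x x; have t_gt0 : 0 < t by rewrite divr_gt0.
pose mu y := lam y - t * gram x y.
have mu_comb : \sum_y mu y *: v y = O - t *: K x.
  rewrite /O (grad_decomp x) scaler_sumr -sumrB; apply: eq_bigr => y _.
  by rewrite /mu scalerBl scalerA.
have mu_sum : \sum_y mu y = 1.
  by rewrite /mu sumrB lam_sum -mulr_sumr gram_row_sum mulr0 subr0.
have mu_x : mu x = 0 by rewrite /mu /t divfK ?subrr // gt_eqF.
have mu_gt0 y : y != x -> 0 < mu y.
  by move=> yx; rewrite /mu subr_gt0 /t mulrAC ltr_pdivrMr // lt_y.
have mu_ge0 y : 0 <= mu y.
  by have [->|/mu_gt0/ltW] := eqVneq y x; rewrite ?mu_x.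
exists (O - t *: K x); split; first by exists mu; rewrite mu_comb.
split; first by exists mu; rewrite mu_comb.
split.
  rewrite -subr_eq0 addrAC subrr add0r oppr_eq0; apply/eqP => tK0.
  have /eqP := congr1 (fun u => dot u (K x)) tK0.
  by rewrite /= dotZl dot0l mulf_eq0 (gt_eqF t_gt0) (gt_eqF gxx).
left=> _ [nu [nu_ge0 [nu_sum ->]]].
have -> : O - t *: K x - O = - (t *: K x) by rewrite addrAC subrr add0r.
rewrite dotNr dotZr oppr_le0 mulr_ge0 ?(ltW t_gt0) //.
by rewrite -mu_comb dot_bary_gradB // mu_x subr0.
Qed.

(* [lam x ^+ 2 / gram x x] is the squared distance from the weight point to
   the plane of the face opposite [v x]. *)
Lemma descent_of_no_face_equilibrium (lam : 'I_4 -> R) x :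
  (forall i, 0 < lam i) -> \sum_i lam i = 1 ->
  ~ equilibrium_on_face v (\sum_i lam i *: v i) x ->
  exists2 y, 0 < gram x y & lam y ^+ 2 / gram y y < lam x ^+ 2 / gram x x.
Proof.
move=> lam_gt0 lam_sum no_equilibrium.
have /existsP[y /andP[yx le_y]] :
    [exists y, (y != x) && (lam y * gram x x <= lam x * gram x y)].
  apply: contraT; rewrite negb_exists => /forallP lt_y; case: no_equilibrium.
  apply: face_equilibrium_of_gram => // y yx.
  by have := lt_y y; rewrite yx -ltNge.
have gxx := gram_diag_gt0 x; have gyy := gram_diag_gt0 y.
have lx := lam_gt0 x; have ly := lam_gt0 y.
have gxy : 0 < gram x y by nra.
exists y => //; rewrite ltr_pdivrMr // mulrAC ltr_pdivlMr //.
have cs := gram_cauchy_schwarz (contra_neq esym yx).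
have : (lam y * gram x x) ^+ 2 <= (lam x * gram x y) ^+ 2.
  by rewrite ler_pXn2r // ?nnegrE ?mulr_ge0 // ltW // mulr_gt0.
have : lam x ^+ 2 * gram x y ^+ 2 < lam x ^+ 2 * (gram x x * gram y y).
  by rewrite ltr_pM2l // exprn_gt0.
rewrite -(ltr_pM2r gxx) !exprMn; nra.
Qed.

Lemma vertex_equilibrium_of_acute (lam : 'I_4 -> R) i :
  (forall j, 0 < lam j) -> \sum_j lam j = 1 ->
  (forall m l, 0 <= dot (v m - v i) (v l - v i)) ->
  equilibrium_on_vertex v (\sum_j lam j *: v j) i.
Proof.
move=> lam_gt0 lam_sum acute; split.
  exists (fun j => (j == i)%:R); split=> [j|]; first by rewrite ler0n.
  split.
    rewrite -[RHS](sum_mul_delta (fun=> 1) i).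
    by apply: eq_bigr => j _; rewrite mul1r eq_sym.
  by rewrite (bigD1 i) //= eqxx scale1r big1 ?addr0 // => j /negPf ->; rewrite scale0r.
split.
  have [z] := @uniq_ord_extend _ [:: i] isT isT; rewrite /= inE andbT => zi.
  apply: contraTneq (lam_gt0 z) => vi_O; rewrite -leNgt.
  by have := dot_bary_grad i z lam_sum; rewrite -vi_O subrr dot0l (negPf zi) subr0 => <-.
left=> _ [nu [nu_ge0 [nu_sum ->]]].
rewrite barycenterB // -opprB barycenterB // dotNr oppr_le0 dot_suml sumr_ge0 // => m _.
rewrite dotZl dot_sumr mulr_ge0 // sumr_ge0 // => l _.
by rewrite dotZr mulr_ge0 // ltW.
Qed.

Lemma gram_cofactor_gt0_of_obtuse n i m l : uniq [:: n; i; m; l] ->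
  dot (v m - v i) (v l - v i) < 0 -> 0 < gram n n * gram m l - gram m n * gram l n.
Proof.
move=> nilm obtuse; move: (nilm); rewrite /= !inE !negb_or.
move=> /and4P[/and3P[ni nm nl] /andP[im il] ml _].
set p := v m - v i; set q := v l - v i.
(* [w] is orthogonal to [K n], hence a combination of [p] and [q], and to [q]. *)
set w := gram n n *: K m - gram m n *: K n.
have w_n : dot w (K n) = 0 by rewrite /w dotBl !dotZl mulrC subrr.
have w_pq : w = dot w (K m) *: p + dot w (K l) *: q.
  by rewrite {1}(edge_decomp i w) (sum_ord4 _ nilm) subrr scaler0 w_n scale0r !add0r.
have q_w : dot q w = 0.
  rewrite /w dotBr !dotZr /q !grad_edge (negPf ml) (eq_sym m i) (negPf im).
  by rewrite (negPf nl) (negPf ni) !subrr !mulr0 subrr.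
have q_q : 0 < dot q q.
  apply: (@dot_self_gt0 _ _ (K l)).
  by rewrite grad_edge eqxx (eq_sym l i) (negPf il) subr0 oner_eq0.
have w_m : dot w (K m) = gram n n * gram m m - gram m n * gram m n.
  by rewrite /w dotBl !dotZl -!/(gram _ _) (gramC n m).
have w_l : dot w (K l) = gram n n * gram m l - gram m n * gram l n.
  by rewrite /w dotBl !dotZl -!/(gram _ _) (gramC n l).
have := gram_cauchy_schwarz (contra_neq esym nm); have := gram_diag_gt0 n.
move: q_w; rewrite {1}w_pq dotDr !dotZr (dotC q p) w_m w_l; nra.
Qed.

Lemma path_inner_vertex_acute u1 u2 u3 u4 : uniq [:: u1; u2; u3; u4] ->
  0 < gram u1 u2 -> 0 < gram u2 u3 -> 0 < gram u3 u4 ->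
  forall m l, 0 <= dot (v m - v u3) (v l - v u3).
Proof.
move=> u_uniq g12 g23 g34 m l; rewrite leNgt; apply/negP => obtuse.
have m3 : m != u3 by apply: contraTneq obtuse => ->; rewrite subrr dot0l ltxx.
have l3 : l != u3 by apply: contraTneq obtuse => ->; rewrite subrr dot0r ltxx.
have ml : m != l by apply: contraTneq obtuse => ->; rewrite -leNgt dot_ge0.
have [n nml] : exists n, uniq [:: n; u3; m; l].
  by apply: uniq_ord_extend; rewrite //= !inE negb_or ml !(eq_sym u3) m3 l3.
have [d12 d14 d24] : [/\ u1 != u2, u1 != u4 & u2 != u4].
  by move: u_uniq; rewrite /= !inE !negb_or => /and4P[/and3P[-> _ ->] /andP[_ ->] _ _].
have row2 := gram_row_sum u2; have row4 := gram_row_sum u4.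
rewrite (sum_ord4 _ u_uniq) (gramC u2 u1) in row2.
rewrite (sum_ord4 _ u_uniq) (gramC u4 u1) (gramC u4 u2) (gramC u4 u3) in row4.
have row2_lt0 : gram u1 u2 + gram u2 u2 + gram u2 u4 < 0 by lra.
have row4_lt0 : gram u1 u4 + gram u2 u4 + gram u4 u4 < 0 by lra.
have [] := obtuse_path_gram_ineqs (gram_diag_gt0 u1) (gram_diag_gt0 u2) (gram_diag_gt0 u4)
  (ltW (gram_cauchy_schwarz d12)) (ltW (gram_cauchy_schwarz d14))
  (ltW (gram_cauchy_schwarz d24)) g12 row2_lt0 row4_lt0.
have cover x : x \in [:: u1; u2; u3; u4] by rewrite mem_uniq_full ?card_ord.
(* [n], [m], [l] enumerate [u1], [u2], [u4], and each of the six orders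
   contradicts one of the three inequalities. *)
move: (cover n) (cover m) (cover l) nml (gram_cofactor_gt0_of_obtuse nml obtuse).
rewrite !inE => /or4P[]/eqP-> /or4P[]/eqP-> /or4P[]/eqP->.
all: rewrite /= ?inE ?eqxx ?orbT ?orTb ?andbF //= => _.
all: rewrite ?(gramC u2 u1) ?(gramC u4 u1) ?(gramC u4 u2); lra.
Qed.

Lemma interior_bary o : interior (tetra v) o ->
  exists2 lam : 'I_4 -> R, (forall i, 0 < lam i) /\ \sum_i lam i = 1 &
    o = \sum_i lam i *: v i.
Proof.
move=> o_int; have [mu [mu_ge0 [mu_sum o_def]]] := interior_subset o_int.
exists mu => //; split=> // x; rewrite lt_def mu_ge0 andbT; apply/eqP => mu_x0.
move: o_int => /nbhs_ballP[e e_gt0 ball_sub].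
pose w := o - v x; pose t := e / (`|w| + 1).
have w1_gt0 : 0 < `|w| + 1 by rewrite ltr_wpDl.
have t_gt0 : 0 < t by rewrite divr_gt0.
have [nu [nu_ge0 [nu_sum nu_def]]] : tetra v (o + t *: w).
  apply: ball_sub; rewrite -ball_normE /ball_ /= opprD addNKr normrN normrZ gtr0_norm //.
  by rewrite /t mulrAC ltr_pdivrMr // ltr_pM2l // ltrDl.
have := dot_bary_grad x x nu_sum; rewrite -nu_def.
have -> : o + t *: w - v x = (1 + t) *: w by rewrite scalerDl scale1r addrAC.
rewrite dotZl /w o_def dot_bary_grad // mu_x0 eqxx /= mulr1n.
by have := nu_ge0 x; lra.
Qed.

Lemma not_monostable_and_mono_unstable :
  ~ (exists q1 q2, interior (tetra v) q1 /\ interior (tetra v) q2 /\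
                  monostable v q1 /\ mono_unstable v q2).
Proof.
case=> q1 [q2 [q1_int [q2_int [[k [_ k_only]] [j [_ j_only]]]]]].
have [lam [lam_gt0 lam_sum] q1_def] := interior_bary q1_int.
have [lam' [lam'_gt0 lam'_sum] q2_def] := interior_bary q2_int.
subst q1 q2.
have descent x : x != k ->
    exists2 y, 0 < gram x y & lam y ^+ 2 / gram y y < lam x ^+ 2 / gram x x.
  by move=> xk; apply: descent_of_no_face_equilibrium => // /k_only kx; rewrite kx eqxx in xk.
have gram_gt0_sym x y : 0 < gram x y -> 0 < gram y x by rewrite gramC.
have [u1 [u2 [u3 [u4 [u_uniq g12 g23 g34]]]]] :=
  hamiltonian_path_of_descent gram_gt0_sym gram_no_star descent.
have u_rev : uniq [:: u4; u3; u2; u1].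
  by rewrite -[[:: u4; u3; u2; u1]]/(rev [:: u1; u2; u3; u4]) rev_uniq.
have j_u3 : j = u3.
  apply/j_only/vertex_equilibrium_of_acute => //.
  exact: path_inner_vertex_acute u_uniq g12 g23 g34.
have j_u2 : j = u2.
  apply/j_only/vertex_equilibrium_of_acute => //.
  by apply: path_inner_vertex_acute u_rev _ _ _; rewrite gramC.
by move: u_uniq; rewrite -j_u2 -j_u3 /= !inE eqxx /= andbF.
Qed.

End Gram.

Theorem theorem1p7 (R : realType) (v : 'I_4 -> 'rV[R]_3) :
  affinely_independent v ->
  ~ (exists O O' : 'rV[R]_3,
       (interior (tetra v)) O /\ (interior (tetra v)) O' /\
       monostable v O /\ mono_unstable v O').
Proof.
move=> /bary_grad_exists[K [grad_edge grad_sum edge_decomp]].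
exact: not_monostable_and_mono_unstable grad_edge grad_sum edge_decomp.
Qed.
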